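(* Let $Q=[u_1,\dots,u_n]\subset\mathbb{S}^2$ with $n\ge 7$ be a spherical polygon not contained in any closed hemisphere, without self-intersections and antipodal intersections, with exactly two essential vertices $u_i,u_j$, and let $u_k,u_l$ be nonessential vertices such that $\{u_i,u_j,u_k,u_l\}$ is not contained in any closed hemisphere. Then the spherical convex hull of the set of nonessential vertices of $Q$ is contained in the union of the spherical triangles $\triangle(\overline u_i,\overline u_j,\overline u_k)$ and $\triangle(\overline u_i,\overline u_j,\overline u_l)$. In particular, this convex hull does not contain $\overline u_i$ nor $\overline u_j$.
   Context: A spherical polygon has edges the minimal great-circle arcs between consecutive vertices; no three vertices lie on a common great circle. A set is balanced if not contained in any closed hemisphere; for balanced $Q$, $u_m$ is essential if the vertex set minus $u_m$ is not balanced, nonessential otherwise. Self-intersection: two non-adjacent edges intersect; antipodal intersection: non-adjacent edges $e,f$ with $e\cap(-f)\neq\emptyset$. $\overline u=-u$. *)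

(* Points of R^3 are row vectors 'rV[R]_3, R : rcfType
   (any real closed field, e.g. the reals). *)
From HB Require Import structures.
From mathcomp Require Import all_boot all_order all_algebra.
Set Implicit Arguments. Unset Strict Implicit. Unset Printing Implicit Defensive.
Import Order.TTheory GRing.Theory Num.Theory.
Local Open Scope ring_scope.

Section Sph.
Variable R : rcfType.
Notation vec := 'rV[R]_3.

Definition dot (x y : vec) : R := \sum_(i < 3) x 0 i * y 0 i.

Definition on_sphere (x : vec) : Prop := dot x x = 1.

Definition in_closed_hemisphere (v x : vec) : Prop := 0 <= dot v x.

Definition balanced (S : vec -> Prop) : Prop :=
  ~ exists v : vec, v != 0 /\ forall x, S x -> in_closed_hemisphere v x.

Definition on_common_great_circle (a b c : vec) : Prop :=
  exists v : vec, v != 0 /\ dot v a = 0 /\ dot v b = 0 /\ dot v c = 0.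

(* the minimal great-circle arc between a and b (a, b not antipodal) *)
Definition arc (a b : vec) (x : vec) : Prop :=
  on_sphere x /\ exists alpha beta : R, 0 <= alpha /\ 0 <= beta /\
    x = alpha *: a + beta *: b.

Definition sph_triangle (a b c : vec) (x : vec) : Prop :=
  on_sphere x /\ exists alpha beta gamma : R,
    [/\ 0 <= alpha, 0 <= beta, 0 <= gamma & x = alpha *: a + beta *: b + gamma *: c].

Definition sph_hull (I : finType) (P : I -> Prop) (p : I -> vec) (x : vec) : Prop :=
  on_sphere x /\ exists c : I -> R,
    (forall m, 0 <= c m) /\ (forall m, ~ P m -> c m = 0) /\
    x = \sum_m c m *: p m.

(* A spherical polygon Q = [u_0, ..., u_{n-1}] : 'I_n -> vec *)
Variable n : nat.
Implicit Types (u : 'I_n -> vec) (a b m : 'I_n).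

Definition vertex_set u (x : vec) : Prop := exists m, x = u m.

Definition vertex_set_minus u m (x : vec) : Prop :=
  exists p, p != m /\ x = u p.

Definition sph_polygon u : Prop :=
  (forall m, on_sphere (u m)) /\
  (forall a b c, a != b -> b != c -> a != c ->
     ~ on_common_great_circle (u a) (u b) (u c)).

(* the m-th edge [u_m, u_{m+1}] (indices mod n) *)
Definition edge u m : vec -> Prop := arc (u m) (u (ordS m)).

Definition nonadjacent a b : bool :=
  [&& a != b, ordS a != b & ordS b != a].

Definition self_intersecting u : Prop :=
  exists a b, nonadjacent a b /\ exists x, edge u a x /\ edge u b x.

Definition antipodal_intersecting u : Prop :=
  exists a b, nonadjacent a b /\ exists x, edge u a x /\ edge u b (- x).

Definition essential u m : Prop := ~ balanced (vertex_set_minus u m).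
Definition nonessential u m : Prop := balanced (vertex_set_minus u m).

End Sph.

From mathcomp Require Import all_boot all_order all_algebra.
From mathcomp Require Import ring lra.
From Stdlib Require Import Classical.
Set Implicit Arguments. Unset Strict Implicit. Unset Printing Implicit Defensive.
Import Order.TTheory GRing.Theory Num.Theory.
Local Open Scope ring_scope.

(* Let [vi], [vj] be poles of closed hemispheres containing every vertex but
   [u i], resp. [u j]; then [dot vi (u i) < 0], and every point of the hull of
   the nonessential vertices has nonnegative product with [vi] and [vj].
   Since [u i], [u j], [u k], [u l] are balanced, [u l] is a combination of the
   other three with negative coefficients, so the four cones spanned by three
   of [- u i], [- u j], [- u k], [- u l] cover space.  A hull point in the cone
   of [- u j], [- u k], [- u l] using both [- u k] and [- u l] makes [vi]
   orthogonal to [u k] and [u l]; then either [vi] is orthogonal to [u j] as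
   well, or [vj] is orthogonal to [u k] and [u l] too, so that [vi] and [vj]
   are proportional, and the signs they take on [u i], [u j] leave no room for
   a fifth vertex.  Finally, [- u i] in the hull would put [u i] and the
   vertices supporting it on the great circle orthogonal to [vj], leaving a
   single vertex antipodal to [u i]. *)

Lemma exists_notin n (s : seq 'I_n) : (size s < n)%N -> exists m : 'I_n, m \notin s.
Proof.
move=> size_lt; have : (0 < #|[predC s]|)%N.
  rewrite -(ltn_add2l #|s|) addn0 cardC card_ord.
  exact: leq_ltn_trans (card_size s) size_lt.
by case/card_gt0P => m; rewrite inE => m_notin; exists m.
Qed.

Section Sphere.
Variable R : rcfType.
Notation vec := 'rV[R]_3.
Implicit Types (a b c d v w x y : vec).

Lemma dotC x y : dot x y = dot y x.
Proof. by apply: eq_bigr => s _; rewrite mulrC. Qed.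

Lemma dotDr v x y : dot v (x + y) = dot v x + dot v y.
Proof. by rewrite /dot -big_split; apply: eq_bigr => s _; rewrite mxE mulrDr. Qed.

Lemma dotZr v (k : R) x : dot v (k *: x) = k * dot v x.
Proof. by rewrite /dot mulr_sumr; apply: eq_bigr => s _; rewrite mxE mulrCA. Qed.

Lemma dotNr v x : dot v (- x) = - dot v x.
Proof. by rewrite -scaleN1r dotZr mulN1r. Qed.

Lemma dot0r v : dot v 0 = 0.
Proof. by rewrite /dot big1 // => s _; rewrite mxE mulr0. Qed.

Lemma dotDl v x y : dot (x + y) v = dot x v + dot y v.
Proof. by rewrite dotC dotDr !(dotC v). Qed.

Lemma dotZl v (k : R) x : dot (k *: x) v = k * dot x v.
Proof. by rewrite dotC dotZr dotC. Qed.

Lemma dotNl v x : dot (- x) v = - dot x v.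
Proof. by rewrite dotC dotNr dotC. Qed.

Lemma dot0l v : dot 0 v = 0.
Proof. by rewrite dotC dot0r. Qed.

Lemma dot_sumr (I : finType) (F : I -> vec) v :
  dot v (\sum_m F m) = \sum_m dot v (F m).
Proof. exact: (big_morph (dot v) (dotDr v) (dot0r v)). Qed.

Lemma dot_neq0l v x : dot v x != 0 -> v != 0.
Proof. by apply: contraNneq => ->; rewrite dot0l. Qed.

Definition rows3 a b c : 'M[R]_3 := \matrix_(r, s) (nth 0 [:: a; b; c] r) 0 s.

Lemma cogreat_of_det_rows3 a b c :
  \det (rows3 a b c) = 0 -> on_common_great_circle a b c.
Proof.
rewrite -det_tr => /eqP /det0P [v nz_v v_ortho]; exists v; split => //.
have dot_row (r : 'I_3) : dot v (nth 0 [:: a; b; c] r) = (v *m (rows3 a b c)^T) 0 r.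
  by rewrite mxE; apply: eq_bigr => s _; rewrite !mxE.
by rewrite (dot_row ord0) (dot_row 1) (dot_row 2) v_ortho !mxE.
Qed.

Lemma exists_ortho2 a b : exists2 v, v != 0 & dot v a = 0 /\ dot v b = 0.
Proof.
have [|v [nz_v [va [vb _]]]] := @cogreat_of_det_rows3 a b 0; last by exists v.
rewrite (expand_det_row _ 2) big1 // => s _.
by rewrite !mxE mul0r.
Qed.

Lemma span_of_ncg a b c x : ~ on_common_great_circle a b c ->
  exists al be ga : R, x = al *: a + be *: b + ga *: c.
Proof.
move=> ncg; have : rows3 a b c \in unitmx.
  by rewrite unitmxE unitfE; apply/eqP => /cogreat_of_det_rows3.
move/mulmxKV => /(_ _ x) <-.
rewrite mulmx_sum_row !big_ord_recr big_ord0 /= add0r.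
by do 3 eexists; congr (_ + _ + _); congr (_ *: _); apply/rowP => s; rewrite !mxE.
Qed.

Definition cone3 a b c x : Prop := exists alpha beta gamma : R,
  [/\ 0 <= alpha, 0 <= beta, 0 <= gamma & x = alpha *: a + beta *: b + gamma *: c].

Lemma cone3C12 a b c x : cone3 a b c x -> cone3 b a c x.
Proof.
case=> al [be [ga [? ? ? ->]]]; exists be, al, ga.
by split; rewrite // (addrC (al *: a)).
Qed.

Lemma balancedS (S S' : vec -> Prop) :
  (forall x, S x -> S' x) -> balanced S -> balanced S'.
Proof.
by move=> sub bal [v [nz_v hemi]]; apply: bal; exists v; split=> // x /sub /hemi.
Qed.

Lemma not_balanced3 a b c : ~ balanced (fun x => x = a \/ x = b \/ x = c).
Proof.
apply; have [w nz_w [wa wb]] := exists_ortho2 a b.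
have [wc|wc] := lerP 0 (dot w c).
  by exists w; split=> // x [->|[->|->]]; rewrite /in_closed_hemisphere ?wa ?wb.
exists (- w); rewrite oppr_eq0; split=> // x [->|[->|->]];
  by rewrite /in_closed_hemisphere dotNl ?wa ?wb ?oppr0 // oppr_ge0 ltW.
Qed.

Lemma balanced4_coef_neg a b c d w (p : R) :
  balanced (fun x => x = a \/ x = b \/ x = c \/ x = d) ->
  dot w b = 0 -> dot w c = 0 -> dot w a != 0 -> dot w d = p * dot w a -> p < 0.
Proof.
move=> bal wb wc wa wd; rewrite ltNge; apply/negP => p_ge0; apply: bal.
exists (Num.sg (dot w a) *: w); split.
  by rewrite scaler_eq0 sgr_eq0 negb_or wa (dot_neq0l wa).
move=> x [->|[->|[->|->]]]; rewrite /in_closed_hemisphere dotZl ?wb ?wc ?mulr0 //.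
  by rewrite -normrEsg.
by rewrite wd mulrCA -normrEsg mulr_ge0.
Qed.

Lemma balanced4_lincomb_neg a b c d (p q r : R) :
  balanced (fun x => x = a \/ x = b \/ x = c \/ x = d) ->
  ~ on_common_great_circle a b c -> d = p *: a + q *: b + r *: c ->
  [/\ p < 0, q < 0 & r < 0].
Proof.
move=> bal ncg ed.
have dot_d w : dot w d = p * dot w a + q * dot w b + r * dot w c.
  by rewrite ed !dotDr !dotZr.
split.
- have [w nz_w [wb wc]] := exists_ortho2 b c.
  apply: (balanced4_coef_neg bal wb wc).
    by apply/eqP => wa; apply: ncg; exists w.
  by rewrite dot_d wb wc !mulr0 !addr0.
- have [w nz_w [wa wc]] := exists_ortho2 a c.
  apply: (balanced4_coef_neg (a := b) (b := a) (d := d) _ wa wc).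
  + by apply: (balancedS _ bal) => x; tauto.
  + by apply/eqP => wb; apply: ncg; exists w.
  + by rewrite dot_d wa wc !mulr0 addr0 add0r.
- have [w nz_w [wa wb]] := exists_ortho2 a b.
  apply: (balanced4_coef_neg (a := c) (c := a) (d := d) _ wb wa).
  + by apply: (balancedS _ bal) => x; tauto.
  + by apply/eqP => wc; apply: ncg; exists w.
  + by rewrite dot_d wa wb !mulr0 !add0r.
Qed.

Lemma exists_max4 (x1 x2 x3 x4 : R) :
  exists2 t, [/\ x1 <= t, x2 <= t, x3 <= t & x4 <= t] &
             [\/ t = x1, t = x2, t = x3 | t = x4].
Proof.
exists (Num.max (Num.max x1 x2) (Num.max x3 x4)).
  by rewrite !le_max !lexx !orbT.
rewrite /Num.max; repeat case: ifP => _;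
  by [constructor 1 | constructor 2 | constructor 3 | constructor 4].
Qed.

Lemma cone3_cover a b c d (p q r : R) x :
  ~ on_common_great_circle a b c -> p < 0 -> q < 0 -> r < 0 ->
  d = p *: a + q *: b + r *: c ->
  [\/ cone3 (- a) (- b) (- c) x, cone3 (- a) (- b) (- d) x,
      cone3 (- a) (- c) (- d) x | cone3 (- b) (- c) (- d) x].
Proof.
move=> ncg p_lt0 q_lt0 r_lt0 ed.
have [xa [xb [xc ex]]] := span_of_ncg x ncg.
pose sa := xa / p; pose sb := xb / q; pose sc := xc / r.
(* As [(-p) a + (-q) b + (-r) c + d = 0], each [t] gives a representation of
   [x]; the least [t] making all coefficients nonnegative kills one of them. *)
have shift t : x = ((sa + t) * - p) *: - a + ((sb + t) * - q) *: - b
                   + ((sc + t) * - r) *: - c + t *: - d.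
  rewrite ex ed /sa /sb /sc; apply/rowP => s; rewrite !mxE; field.
  by rewrite !ltr0_neq0.
have [t [t_ge0 t_ge_a t_ge_b t_ge_c] t_eq] := exists_max4 0 (- sa) (- sb) (- sc).
have ca : 0 <= (sa + t) * - p by apply: mulr_ge0; lra.
have cb : 0 <= (sb + t) * - q by apply: mulr_ge0; lra.
have cc : 0 <= (sc + t) * - r by apply: mulr_ge0; lra.
case: t_eq => t_eq.
- constructor 1; exists ((sa + t) * - p), ((sb + t) * - q), ((sc + t) * - r).
  by split=> //; rewrite {1}(shift t) t_eq scale0r addr0.
- constructor 4; exists ((sb + t) * - q), ((sc + t) * - r), t.
  by split=> //; rewrite {1}(shift t) t_eq subrr mul0r scale0r add0r.
- constructor 3; exists ((sa + t) * - p), ((sc + t) * - r), t.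
  by split=> //; rewrite {1}(shift t) t_eq subrr mul0r scale0r addr0.
- constructor 2; exists ((sa + t) * - p), ((sb + t) * - q), t.
  by split=> //; rewrite {1}(shift t) t_eq subrr mul0r scale0r addr0.
Qed.

Lemma dot_scale_ge0 (c : R) v y :
  0 <= c -> (c != 0 -> 0 <= dot v y) -> 0 <= dot v (c *: y).
Proof.
by move=> c_ge0 y_ge0; rewrite dotZr; have [->|/y_ge0] := eqVneq c 0;
  [rewrite mul0r | exact: mulr_ge0].
Qed.

Lemma dot_cone_ge0 (I : finType) (c : I -> R) (p : I -> vec) v :
  (forall m, 0 <= c m) -> (forall m, c m != 0 -> 0 <= dot v (p m)) ->
  0 <= dot v (\sum_m c m *: p m).
Proof.
move=> c_ge0 p_ge0; rewrite dot_sumr; apply: sumr_ge0 => m _.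
exact: dot_scale_ge0 (c_ge0 m) (@p_ge0 m).
Qed.

Lemma dot_cone_eq0 (I : finType) (c : I -> R) (p : I -> vec) v :
  (forall m, 0 <= c m) -> (forall m, c m != 0 -> 0 <= dot v (p m)) ->
  dot v (\sum_m c m *: p m) <= 0 -> forall m, c m != 0 -> dot v (p m) = 0.
Proof.
move=> c_ge0 p_ge0 sum_le0 m cm_neq0.
have sum_eq0 : \sum_m' dot v (c m' *: p m') = 0.
  by apply/eqP; rewrite -dot_sumr eq_le sum_le0 dot_cone_ge0.
apply: (mulfI cm_neq0); rewrite mulr0 -dotZr.
apply: (psumr_eq0P _ sum_eq0) => // m' _.
exact: dot_scale_ge0 (c_ge0 m') (@p_ge0 m').
Qed.

Lemma sph_hull_dot_ge0 (I : finType) (P : I -> Prop) (p : I -> vec) v x :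
  (forall m, P m -> 0 <= dot v (p m)) -> sph_hull P p x -> 0 <= dot v x.
Proof.
move=> p_ge0 [_ [c [c_ge0 [c_out ->]]]]; apply: dot_cone_ge0 => // m cm_neq0.
by apply: p_ge0; apply: NNPP => /c_out /eqP; apply/negP.
Qed.

Section Polygon.
Variables (n : nat) (u : 'I_n -> vec).
Hypothesis polyQ : sph_polygon u.

Lemma essential_hemisphere m : essential u m ->
  exists2 v, v != 0 & forall p, p != m -> 0 <= dot v (u p).
Proof.
move=> /NNPP [v [nz_v hemi]]; exists v => // p p_neq_m.
by apply: hemi; exists p.
Qed.

Lemma nonessential_neq m m' : essential u m -> nonessential u m' -> m != m'.
Proof. by move=> ess_m ne_m'; apply/eqP => e; apply: ess_m; rewrite e. Qed.

Definition separating_pole m v : Prop :=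
  dot v (u m) < 0 /\ forall p, p != m -> 0 <= dot v (u p).

Lemma essential_separating_pole m : balanced (vertex_set u) -> essential u m ->
  exists v, separating_pole m v.
Proof.
move=> balQ /essential_hemisphere [v nz_v hemi]; exists v; split=> //.
rewrite ltNge; apply/negP => um_ge0; apply: balQ; exists v; split=> // x [p ->].
by have [->|/hemi] := eqVneq p m.
Qed.

Lemma separating_poles_not_ortho2 i j k l m vi vj :
  uniq [:: i; j; k; l; m] -> separating_pole i vi -> separating_pole j vj ->
  dot vi (u k) = 0 -> dot vi (u l) = 0 -> dot vj (u k) = 0 -> dot vj (u l) = 0 ->
  False.
Proof.
move=> uniq5 [vi_i vi_ge0] [vj_j vj_ge0] vi_k vi_l vj_k vj_l.
move: uniq5; rewrite /= !inE !negb_or.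
case/and5P=> /and4P [ij ik il im] /and3P [_ _ jm] /andP [kl km] lm _.
(* [w] is orthogonal to [u i], [u k], [u l], hence zero: [vj] is a multiple of [vi]. *)
pose w := dot vj (u i) *: vi - dot vi (u i) *: vj.
have dot_w y : dot w y = dot vj (u i) * dot vi y - dot vi (u i) * dot vj y.
  by rewrite dotDl dotNl !dotZl.
have w_eq0 : w = 0.
  apply/eqP; apply: contraT => nz_w; case: (polyQ.2 _ _ _ ik kl il).
  by exists w; rewrite !dot_w vi_k vi_l vj_k vj_l !mulr0 subrr mulrC subrr.
have vj_i_gt0 : 0 < dot vj (u i).
  have := dot_w (u j); rewrite w_eq0 dot0l => /eqP; rewrite eq_sym subr_eq0 => /eqP.
  have : 0 < dot vi (u i) * dot vj (u j) by rewrite nmulr_rgt0.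
  have : 0 <= dot vi (u j) by rewrite vi_ge0 // eq_sym.
  nra.
have vi_m : dot vi (u m) = 0.
  have := dot_w (u m); rewrite w_eq0 dot0l => /eqP; rewrite eq_sym subr_eq0 => /eqP.
  have : 0 <= dot vi (u m) by rewrite vi_ge0 // eq_sym.
  have : 0 <= dot vj (u m) by rewrite vj_ge0 // eq_sym.
  nra.
case: (polyQ.2 _ _ _ kl lm km); exists vi; split=> //.
by apply: (dot_neq0l (x := u i)); rewrite ltr0_neq0.
Qed.

Lemma separating_poles_cone i j k l m vi vj x :
  uniq [:: i; j; k; l; m] -> separating_pole i vi -> separating_pole j vj ->
  0 <= dot vi x -> 0 <= dot vj x -> cone3 (- u j) (- u k) (- u l) x ->
  cone3 (- u i) (- u j) (- u k) x \/ cone3 (- u i) (- u j) (- u l) x.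
Proof.
move=> uniq5 pole_i pole_j vi_x vj_x [be [ga [de [be_ge0 ga_ge0 de_ge0 ex]]]].
have [ga_eq0|ga_neq0] := eqVneq ga 0.
  by right; exists 0, be, de; split; rewrite // ex ga_eq0 !scale0r add0r addr0.
have [de_eq0|de_neq0] := eqVneq de 0.
  by left; exists 0, be, ga; split; rewrite // ex de_eq0 !scale0r add0r addr0.
exfalso; move: (uniq5); rewrite /= !inE !negb_or.
case/and5P=> /and4P [ij ik il _] /and3P [jk jl _] /andP [kl _] _ _.
have [[vi_i vi_ge0] [vj_j vj_ge0]] := (pole_i, pole_j).
have cancel_factor (s y : R) : s != 0 -> s * y = 0 -> y = 0.
  by move=> s_neq0 sy_eq0; apply: (mulfI s_neq0); rewrite mulr0.
have dot_x v : dot v x = - (be * dot v (u j) + ga * dot v (u k) + de * dot v (u l)).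
  by rewrite ex !dotDr !dotZr !dotNr; ring.
(* Every term of [dot vi x] is [<= 0], so all of them vanish. *)
have vi_j : 0 <= dot vi (u j) by rewrite vi_ge0 // eq_sym.
have vi_k : 0 <= dot vi (u k) by rewrite vi_ge0 // eq_sym.
have vi_l : 0 <= dot vi (u l) by rewrite vi_ge0 // eq_sym.
have [be_vi_j ga_vi_k de_vi_l] : [/\ be * dot vi (u j) = 0,
    ga * dot vi (u k) = 0 & de * dot vi (u l) = 0].
  have := dot_x vi; have := mulr_ge0 be_ge0 vi_j; have := mulr_ge0 ga_ge0 vi_k.
  have := mulr_ge0 de_ge0 vi_l; split; lra.
have vi_k0 := cancel_factor _ _ ga_neq0 ga_vi_k.
have vi_l0 := cancel_factor _ _ de_neq0 de_vi_l.
have [be_eq0|be_neq0] := eqVneq be 0.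
  have vj_k : 0 <= dot vj (u k) by rewrite vj_ge0 // eq_sym.
  have vj_l : 0 <= dot vj (u l) by rewrite vj_ge0 // eq_sym.
  have [ga_vj_k de_vj_l] : ga * dot vj (u k) = 0 /\ de * dot vj (u l) = 0.
    have := dot_x vj; rewrite be_eq0 mul0r add0r.
    have := mulr_ge0 ga_ge0 vj_k; have := mulr_ge0 de_ge0 vj_l; split; lra.
  apply: (separating_poles_not_ortho2 uniq5 pole_i pole_j vi_k0 vi_l0).
    exact: cancel_factor ga_neq0 ga_vj_k.
  exact: cancel_factor de_neq0 de_vj_l.
case: (polyQ.2 _ _ _ jk kl jl); exists vi; split.
  by apply: (dot_neq0l (x := u i)); rewrite ltr0_neq0.
by rewrite (cancel_factor _ _ be_neq0 be_vi_j).
Qed.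

Lemma vertex_neq_scale (a b : 'I_n) (s : R) : (2 < n)%N -> a != b -> u a != s *: u b.
Proof.
move=> n_gt2 ab; apply/eqP => ua.
have [p] := @exists_notin n [:: a; b] n_gt2; rewrite !inE negb_or => /andP [pa pb].
have [w nz_w [wb wp]] := exists_ortho2 (u b) (u p).
rewrite eq_sym in pa; rewrite eq_sym in pb.
case: (polyQ.2 _ _ _ ab pb pa); exists w.
by rewrite ua dotZr wb mulr0.
Qed.

Lemma antipode_notin_sph_hull i j : (2 < n)%N ->
  essential u i -> essential u j -> i != j -> ~ sph_hull (nonessential u) u (- u i).
Proof.
move=> n_gt2 ess_i ess_j ij [_ [c [c_ge0 [c_out ex]]]].
have [v nz_v v_ge0] := essential_hemisphere ess_j.
have supp m : c m != 0 -> i != m /\ j != m.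
  move=> cm_neq0; have ne_m : nonessential u m.
    by apply: NNPP => /c_out /eqP; apply/negP.
  by split; apply: nonessential_neq.
have supp_ge0 m : c m != 0 -> 0 <= dot v (u m).
  by case/supp => _ jm; apply: v_ge0; rewrite eq_sym.
(* [- u i] and [u i] both lie in the hemisphere of [v], hence on its boundary. *)
have v_i : dot v (u i) = 0.
  have := dot_cone_ge0 c_ge0 supp_ge0; rewrite -ex dotNr oppr_ge0.
  by have := v_ge0 i ij; lra.
have on_circle : forall m, c m != 0 -> dot v (u m) = 0.
  by apply: dot_cone_eq0 => //; rewrite -ex dotNr v_i oppr0.
have [m1 cm1_neq0] : exists m1, c m1 != 0.
  apply: NNPP => c_eq0; have := polyQ.1 i; apply/eqP.
  rewrite /on_sphere -[u i]opprK ex big1 ?oppr0 ?dot0l 1?eq_sym ?oner_eq0 // => m _.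
  have -> : c m = 0 by apply: NNPP => cm_neq0; apply: c_eq0; exists m; apply/eqP.
  exact: scale0r.
(* Two weighted vertices would lie with [u i] on the great circle orthogonal to [v]. *)
have c_single m : m != m1 -> c m = 0.
  move=> m_neq_m1; apply/eqP; apply: contraT => cm_neq0.
  case: (polyQ.2 i m1 m (supp _ cm1_neq0).1 _ (supp _ cm_neq0).1).
    by rewrite eq_sym.
  by exists v; rewrite v_i !on_circle.
have : u i = - c m1 *: u m1.
  apply: oppr_inj; rewrite scaleNr opprK ex (bigD1 m1) //= big1 ?addr0 //.
  move=> m m_neq_m1.
  by rewrite c_single ?scale0r.
by apply/eqP; rewrite vertex_neq_scale // (supp _ cm1_neq0).1.
Qed.

Lemma sph_hull_sub_triangles i j k l x : (4 < n)%N -> balanced (vertex_set u) ->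
  essential u i -> essential u j -> i != j ->
  nonessential u k -> nonessential u l ->
  balanced (fun y => y = u i \/ y = u j \/ y = u k \/ y = u l) ->
  sph_hull (nonessential u) u x ->
  sph_triangle (- u i) (- u j) (- u k) x \/ sph_triangle (- u i) (- u j) (- u l) x.
Proof.
move=> n_gt4 balQ ess_i ess_j ij ne_k ne_l bal4 hull_x.
have [vi pole_i] := essential_separating_pole balQ ess_i.
have [vj pole_j] := essential_separating_pole balQ ess_j.
have [ik il] := (nonessential_neq ess_i ne_k, nonessential_neq ess_i ne_l).
have [jk jl] := (nonessential_neq ess_j ne_k, nonessential_neq ess_j ne_l).
have kl : k != l.
  apply/eqP => k_eq_l; apply: (@not_balanced3 (u i) (u j) (u k)).
  by apply: (balancedS _ bal4) => y; rewrite k_eq_l; tauto.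
have [m] := @exists_notin n [:: i; j; k; l] n_gt4.
rewrite !inE !negb_or ![m == _]eq_sym => /and4P [im jm km lm].
have ji : j != i by rewrite eq_sym.
have [uniq_ij uniq_ji] : uniq [:: i; j; k; l; m] /\ uniq [:: j; i; k; l; m].
  by rewrite /= !inE !negb_or ij ji ik il im jk jl jm kl km lm.
have [vi_x vj_x] : 0 <= dot vi x /\ 0 <= dot vj x.
  split; apply: (sph_hull_dot_ge0 _ hull_x) => p ne_p;
    [apply: pole_i.2 | apply: pole_j.2]; rewrite eq_sym; exact: nonessential_neq.
have ncg : ~ on_common_great_circle (u i) (u j) (u k) := polyQ.2 _ _ _ ij jk ik.
have [p [q [r ul]]] := span_of_ncg (u l) ncg.
have [p_lt0 q_lt0 r_lt0] := balanced4_lincomb_neg bal4 ncg ul.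
case: hull_x => x_sph _.
case: (cone3_cover x ncg p_lt0 q_lt0 r_lt0 ul) => [x_ijk | x_ijl | x_ikl | x_jkl].
- by left.
- by right.
- have := separating_poles_cone uniq_ji pole_j pole_i vj_x vi_x x_ikl.
  by case=> /cone3C12 x_cone; [left | right].
- have := separating_poles_cone uniq_ij pole_i pole_j vi_x vj_x x_jkl.
  by case=> x_cone; [left | right].
Qed.

End Polygon.
End Sphere.

Theorem lemma8 (R : rcfType) (n : nat) (u : 'I_n -> 'rV[R]_3)
    (i j k l : 'I_n) :
  (7 <= n)%N ->
  sph_polygon u ->
  balanced (vertex_set u) ->
  ~ self_intersecting u ->
  ~ antipodal_intersecting u ->
  i != j -> essential u i -> essential u j ->
  (forall m, essential u m -> m = i \/ m = j) ->
  nonessential u k -> nonessential u l ->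
  balanced (fun x => x = u i \/ x = u j \/ x = u k \/ x = u l) ->
  (forall x, sph_hull (nonessential u) u x ->
     sph_triangle (- u i) (- u j) (- u k) x \/
     sph_triangle (- u i) (- u j) (- u l) x) /\
  ~ sph_hull (nonessential u) u (- u i) /\
  ~ sph_hull (nonessential u) u (- u j).
Proof.
move=> n_ge7 polyQ balQ _ _ ij ess_i ess_j _ ne_k ne_l bal4.
have n_gt4 : (4 < n)%N by apply: leq_trans n_ge7.
have n_gt2 : (2 < n)%N by apply: leq_trans n_ge7.
split; first by move=> x; apply: sph_hull_sub_triangles.
split; first exact: (antipode_notin_sph_hull polyQ n_gt2 ess_i ess_j ij).
have ji : j != i by rewrite eq_sym.
exact: (antipode_notin_sph_hull polyQ n_gt2 ess_j ess_i ji).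
Qed.
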